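(* Consider the stochastic learning dynamics described in the context, with $K\ge 2$ arms, Poisson clock rate $\lambda>0$, and parameters $1\ge p_1>p_2\ge\cdots\ge p_K\ge 0$. For any $\delta\in(0,1]$, $\mu\in(0,1]$, $p_1\in(0,1]$ and $p_2\neq 0$, the success event $E^N=\{\lim_{t\to\infty}X^N(t)=(0,N,0,\dots,0)\}$ satisfies \[ \mathbb{P}\{E^N\}\ \ge\ 1-\Big(\frac{p_1}{p_2}\Big)^{-(1-\delta)\frac{\mu p_1}{K e}N}-e^{-\frac{\mu p_1}{K e}\frac{\delta^2}{2}N}, \] where $e\approx 2.7183$ is Euler's number.
   Context: Learning dynamics: there are $K\ge 2$ arms; each pull of arm $k\in\{1,\dots,K\}$ yields an independent Bernoulli$(p_k)$ reward, where $1\ge p_1>p_2\ge\cdots\ge p_K\ge 0$ (arm 1 is the unique best arm); a ''null arm'' $0$ always yields reward $0$. There are $N$ individuals, each with an independent Poisson clock of rate $\lambda>0$ and a memory variable $M\in\{0,1,\dots,K\}$, initially $M=0$ for every individual. Fix $\mu\in(0,1]$. When an individual's clock ticks, it selects an arm $c\in\{0,\dots,K\}$ as follows: if its $M=0$, then with probability $\mu$ it sets $c$ uniformly at random in $\{1,\dots,K\}$, and with probability $1-\mu$ it picks a peer uniformly at random among all $N$ individuals (including itself) and sets $c$ to that peer's memory value; if its $M\neq 0$, it always picks a peer uniformly at random (including itself) and sets $c$ to that peer's memory value. It then pulls arm $c$, and if the reward is $1$ it sets $M\leftarrow c$ (otherwise $M$ is unchanged). Let $X^N(t)=(X^N_0(t),\dots,X^N_K(t))$,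 where $X^N_k(t)$ is the number of individuals whose memory equals $k$ at time $t$; $X^N(0)=(N,0,\dots,0)$. Equivalently, $X^N$ is the continuous-time Markov chain on nonnegative integer vectors summing to $N$ that, from state $s$, jumps to $s+e^k$ at rate $s_0\lambda(\frac{\mu}{K}+(1-\mu)\frac{s_k}{N})p_k$ for $k=1,\dots,K$, and to $s+e^k-e^{k'}$ at rate $s_{k'}\lambda\frac{s_k}{N}p_k$ for distinct $k,k'\in\{1,\dots,K\}$, where $e^k$ is the $k$-th unit vector (coordinates indexed from $0$). *)

From Stdlib Require Import Reals List Arith.
From Coquelicot Require Import Coquelicot.
Open Scope R_scope.

(* A state is a configuration s : nat -> nat, where s i (0 <= i <= K) is the
   number of individuals whose memory equals i (coordinate 0 = null arm).
   Coordinates > K are never touched. *)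

Definition sumR (l : list nat) (f : nat -> R) : R :=
  fold_right (fun i acc => f i + acc) 0 l.

Definition arms (K : nat) : list nat := seq 1 K.

Definition move (s : nat -> nat) (k k' : nat) : nat -> nat :=
  fun i => if Nat.eqb i k then S (s i)
           else if Nat.eqb i k' then Nat.pred (s i) else s i.

(* rate of the jump s -> s + e^k - e^0 (an individual with M = 0 learns arm k) *)
Definition rate_in (K N : nat) (lam mu : R) (p : nat -> R) (s : nat -> nat)
  (k : nat) : R :=
  INR (s 0%nat) * lam * (mu / INR K + (1 - mu) * (INR (s k) / INR N)) * p k.

(* rate of the jump s -> s + e^k - e^{k'}, k <> k' in {1..K} *)
Definition rate_sw (N : nat) (lam : R) (p : nat -> R) (s : nat -> nat)
  (k k' : nat) : R :=
  INR (s k') * lam * (INR (s k) / INR N) * p k.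

Definition others (K k : nat) : list nat :=
  filter (fun k' => negb (Nat.eqb k' k)) (arms K).

Definition total_rate (K N : nat) (lam mu : R) (p : nat -> R) (s : nat -> nat) : R :=
  sumR (arms K) (fun k => rate_in K N lam mu p s k)
  + sumR (arms K) (fun k => sumR (others K k) (fun k' => rate_sw N lam p s k k')).

Definition init_state (N : nat) : nat -> nat :=
  fun i => if Nat.eqb i 0 then N else 0%nat.

Definition is_target (K N : nat) (s : nat -> nat) : bool :=
  forallb (fun i => Nat.eqb (s i) (if Nat.eqb i 1 then N else 0%nat)) (seq 0 (S K)).

(* reach K N lam mu p n s = probability that the embedded jump chain of X^N,
   started at s and stopped when it reaches an absorbing state (total rate 0),
   is at the target (0,N,0,...,0) after n jumps. *)
Fixpoint reach (K N : nat) (lam mu : R) (p : nat -> R) (n : nat)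
  (s : nat -> nat) : R :=
  match n with
  | O => if is_target K N s then 1 else 0
  | S n' =>
      let tot := total_rate K N lam mu p s in
      if Req_EM_T tot 0 then reach K N lam mu p n' s
      else
        (sumR (arms K) (fun k =>
            rate_in K N lam mu p s k * reach K N lam mu p n' (move s k 0%nat))
         + sumR (arms K) (fun k => sumR (others K k) (fun k' =>
            rate_sw N lam p s k k' * reach K N lam mu p n' (move s k k'))))
        / tot
  end.

(* On the finite state space, X^N(t) converges to the absorbing target iff the
   jump chain hits the target, whose probability is the (monotone) limit of
   reach ... n (init_state N). *)
Definition success_prob (K N : nat) (lam mu : R) (p : nat -> R) : R :=
  real (Lim_seq (fun n => reach K N lam mu p n (init_state N))).

(* The potential G(s) = r^(s 1) * a^(s 0), with r = p2/p1 and a = 1 - (mu/K)(1 - r), is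
   superharmonic for the embedded jump chain: a learning event goes to arm 1 with probability
   at least mu/K, and the swaps between arm 1 and an arm j >= 2 have a drift proportional to
   (1 - r)(pj - p2) <= 0.  Every absorbing state other than the target has s 0 = s 1 = 0, hence
   potential 1, so the chain ends elsewhere with probability at most G(init) = a^N.  Absorption
   itself is almost sure, because from any state an explicit path of at most 2N jumps, each of
   probability bounded below, reaches an absorbing state.  Finally
   a^N <= exp (- (mu/K)(1 - r) N), which is below the Rpower term when r >= 1/e and below the
   exponential term otherwise. *)

From Pilot Require Import Defs.
From Stdlib Require Import Reals Lra Lia List Classical.
From Coquelicot Require Import Coquelicot.
Open Scope R_scope.

(** * Sums over lists *)

Definition lsum {A : Type} (l : list A) (f : A -> R) : R :=
  fold_right (fun x acc => f x + acc) 0 l.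

Section ListSum.
Context {A : Type}.
Implicit Types (l : list A) (f g : A -> R).

Lemma lsum_cons x l f : lsum (x :: l) f = f x + lsum l f.
Proof. reflexivity. Qed.

Lemma lsum_app l1 l2 f : lsum (l1 ++ l2) f = lsum l1 f + lsum l2 f.
Proof. induction l1 as [|x l1 IH]; simpl; [|rewrite IH]; lra. Qed.

Lemma lsum_map {B : Type} (h : B -> A) (l : list B) f :
  lsum (map h l) f = lsum l (fun x => f (h x)).
Proof. induction l as [|x l IH]; simpl; congruence. Qed.

Lemma lsum_flat_map {B : Type} (h : B -> list A) (l : list B) f :
  lsum (flat_map h l) f = lsum l (fun x => lsum (h x) f).
Proof. induction l as [|x l IH]; simpl; [|rewrite lsum_app, IH]; reflexivity. Qed.

Lemma lsum_ext l f g : (forall x, In x l -> f x = g x) -> lsum l f = lsum l g.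
Proof.
  induction l as [|x l IH]; simpl; intros H; [reflexivity|].
  rewrite H, IH by auto; reflexivity.
Qed.

Lemma lsum_le l f g : (forall x, In x l -> f x <= g x) -> lsum l f <= lsum l g.
Proof.
  induction l as [|x l IH]; simpl; intros H; [lra|].
  assert (lsum l f <= lsum l g) by auto.
  assert (f x <= g x) by auto.
  lra.
Qed.

Lemma lsum_plus l f g : lsum l (fun x => f x + g x) = lsum l f + lsum l g.
Proof. induction l as [|x l IH]; simpl; [|rewrite IH]; lra. Qed.

Lemma lsum_scal l c f : lsum l (fun x => c * f x) = c * lsum l f.
Proof. induction l as [|x l IH]; simpl; [|rewrite IH]; lra. Qed.

Lemma lsum_const l c : lsum l (fun _ => c) = INR (length l) * c.
Proof. induction l as [|x l IH]; simpl length; [simpl|rewrite S_INR; simpl; rewrite IH]; lra. Qed.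

Lemma lsum_zero l f : (forall x, In x l -> f x = 0) -> lsum l f = 0.
Proof. intros H. rewrite (lsum_ext l f (fun _ => 0)), lsum_const by auto. lra. Qed.

Lemma lsum_nonneg l f : (forall x, In x l -> 0 <= f x) -> 0 <= lsum l f.
Proof. intros H. rewrite <- (lsum_zero l (fun _ => 0)) by auto. now apply lsum_le. Qed.

Lemma lsum_le_const l f c : (forall x, In x l -> f x <= c) -> lsum l f <= INR (length l) * c.
Proof. intros H. rewrite <- lsum_const. now apply lsum_le. Qed.

Lemma lsum_ge_term l f x : (forall y, In y l -> 0 <= f y) -> In x l -> f x <= lsum l f.
Proof.
  induction l as [|y l IH]; simpl; intros H Hx; [contradiction|].
  assert (0 <= lsum l f) by (apply lsum_nonneg; auto).
  destruct Hx as [<-|Hx]; [lra|].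
  assert (f x <= lsum l f) by auto.
  assert (0 <= f y) by auto.
  lra.
Qed.

End ListSum.

Lemma lsum_indicator (l : list nat) (x : nat) :
  NoDup l -> In x l -> lsum l (fun i => if Nat.eqb i x then 1 else 0) = 1.
Proof.
  induction l as [|y l IH]; simpl; intros Hnd Hx; [contradiction|].
  inversion Hnd as [|? ? Hy Hnd']; subst.
  destruct (Nat.eqb_spec y x) as [<-|Hne].
  - rewrite lsum_zero; [lra|].
    intros i Hi; destruct (Nat.eqb_spec i y); [subst; contradiction|reflexivity].
  - destruct Hx as [->|Hx]; [contradiction|]. rewrite IH by assumption. lra.
Qed.

(** * Embedded jump chains *)

(* A chain is given by the list of its jumps (rate, target) out of each state; [step f s] is the
   expectation of [f] after one jump of the embedded chain, which stays put at absorbing states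
   (total rate 0). *)
Section JumpChain.
Context {State : Type}.
Variable jumps : State -> list (R * State).

Definition out_rate (s : State) : R := lsum (jumps s) fst.

Definition step (f : State -> R) (s : State) : R :=
  if Req_EM_T (out_rate s) 0 then f s
  else lsum (jumps s) (fun j => fst j * f (snd j)) / out_rate s.

Definition absorbed (s : State) : R := if Req_EM_T (out_rate s) 0 then 1 else 0.

Definition jump_invariant (P : State -> Prop) : Prop :=
  forall s j, P s -> In j (jumps s) -> fst j <> 0 -> P (snd j).

Lemma jump_invariant_True : jump_invariant (fun _ => True).
Proof. now intros. Qed.

Lemma out_rate_zero s : (forall j, In j (jumps s) -> fst j = 0) -> out_rate s = 0.
Proof. apply lsum_zero. Qed.

Lemma step_ext f g s : (forall s', f s' = g s') -> step f s = step g s.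
Proof.
  intros H. unfold step.
  rewrite H, (lsum_ext _ _ (fun j => fst j * g (snd j))) by (intros; now rewrite H).
  reflexivity.
Qed.

Lemma step_absorbing f s : out_rate s = 0 -> step f s = f s.
Proof. intros H. unfold step. now destruct (Req_EM_T (out_rate s) 0). Qed.

Lemma step_lin a b f g s :
  step (fun x => a * f x + b * g x) s = a * step f s + b * step g s.
Proof.
  unfold step. destruct (Req_EM_T (out_rate s) 0) as [|Hs]; [reflexivity|].
  rewrite (lsum_ext _ _ (fun j => a * (fst j * f (snd j)) + b * (fst j * g (snd j))))
    by (intros; ring).
  rewrite lsum_plus, !lsum_scal. field. exact Hs.
Qed.

Lemma step_const c s : step (fun _ => c) s = c.
Proof.
  unfold step. destruct (Req_EM_T (out_rate s) 0) as [|Hs]; [reflexivity|].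
  rewrite (lsum_ext _ _ (fun j => c * fst j)) by (intros; ring).
  rewrite lsum_scal. fold (out_rate s). field. exact Hs.
Qed.

Lemma iter_absorbing n f s : out_rate s = 0 -> Nat.iter n step f s = f s.
Proof. intros H. induction n; simpl; [|rewrite step_absorbing]; auto. Qed.

Lemma iter_lin n a b f g s :
  Nat.iter n step (fun x => a * f x + b * g x) s
  = a * Nat.iter n step f s + b * Nat.iter n step g s.
Proof.
  revert s. induction n; intros s; simpl; [reflexivity|].
  rewrite <- step_lin. apply step_ext. auto.
Qed.

Lemma iter_const n c s : Nat.iter n step (fun _ => c) s = c.
Proof.
  revert s. induction n; intros s; simpl; [reflexivity|].
  rewrite (step_ext _ (fun _ => c)) by auto. apply step_const.
Qed.

Hypothesis jump_rate_nonneg : forall s j, In j (jumps s) -> 0 <= fst j.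

Lemma out_rate_nonneg s : 0 <= out_rate s.
Proof. apply lsum_nonneg, jump_rate_nonneg. Qed.

Lemma jump_rate_le_out_rate s j : In j (jumps s) -> fst j <= out_rate s.
Proof. apply lsum_ge_term, jump_rate_nonneg. Qed.

Lemma step_mono (P : State -> Prop) f g s :
  jump_invariant P -> P s -> (forall s', P s' -> f s' <= g s') -> step f s <= step g s.
Proof.
  intros HP Hs Hfg. unfold step. destruct (Req_EM_T (out_rate s) 0) as [|Hs0]; [auto|].
  pose proof (out_rate_nonneg s).
  apply Rmult_le_compat_r; [apply Rlt_le, Rinv_0_lt_compat; lra|].
  apply lsum_le. intros j Hj. pose proof (jump_rate_nonneg s j Hj).
  destruct (Req_EM_T (fst j) 0) as [->|Hj0]; [lra|].
  apply Rmult_le_compat_l; auto. apply Hfg. eapply HP; eauto.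
Qed.

Lemma iter_mono (P : State -> Prop) n f g s :
  jump_invariant P -> P s -> (forall s', P s' -> f s' <= g s') ->
  Nat.iter n step f s <= Nat.iter n step g s.
Proof.
  intros HP. revert s. induction n; intros s Hs Hfg; simpl; [auto|].
  apply (step_mono P); auto.
Qed.

Lemma step_ge_jump f s j :
  (forall s', 0 <= f s') -> out_rate s <> 0 -> In j (jumps s) ->
  fst j / out_rate s * f (snd j) <= step f s.
Proof.
  intros Hf Hs Hj. unfold step. destruct (Req_EM_T (out_rate s) 0); [contradiction|].
  pose proof (out_rate_nonneg s).
  assert (fst j * f (snd j) <= lsum (jumps s) (fun j => fst j * f (snd j))).
  { apply (lsum_ge_term _ (fun j => fst j * f (snd j))); auto.
    intros y Hy. apply Rmult_le_pos; [apply (jump_rate_nonneg s)|]; auto. }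
  replace (fst j / out_rate s * f (snd j)) with (fst j * f (snd j) / out_rate s) by (field; auto).
  apply Rmult_le_compat_r; [apply Rlt_le, Rinv_0_lt_compat; lra|auto].
Qed.

Lemma step_le_of_drift f s :
  lsum (jumps s) (fun j => fst j * (f (snd j) - f s)) <= 0 -> step f s <= f s.
Proof.
  intros Hdrift. unfold step. destruct (Req_EM_T (out_rate s) 0) as [|Hs]; [lra|].
  pose proof (out_rate_nonneg s).
  rewrite (lsum_ext _ _ (fun j => fst j * f (snd j) + (- f s) * fst j)) in Hdrift
    by (intros; ring).
  rewrite lsum_plus, lsum_scal in Hdrift. fold (out_rate s) in Hdrift.
  apply Rle_div_l; [lra|]. lra.
Qed.

Lemma iter_superharmonic (P : State -> Prop) G n s :
  jump_invariant P -> (forall s', P s' -> step G s' <= G s') -> P s -> Nat.iter n step G s <= G s.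
Proof.
  intros HP HG. revert s. induction n; intros s Hs; simpl; [lra|].
  apply Rle_trans with (step G s); [apply (step_mono P)|]; auto.
Qed.

Lemma absorbed_absorbing s : out_rate s = 0 -> absorbed s = 1.
Proof. intros H. unfold absorbed. now destruct (Req_EM_T (out_rate s) 0). Qed.

Lemma absorbed_active s : out_rate s <> 0 -> absorbed s = 0.
Proof. intros H. unfold absorbed. now destruct (Req_EM_T (out_rate s) 0). Qed.

Lemma absorbed_bounds s : 0 <= absorbed s <= 1.
Proof. unfold absorbed. destruct (Req_EM_T (out_rate s) 0); lra. Qed.

Lemma iter_absorbed_absorbing n s : out_rate s = 0 -> Nat.iter n step absorbed s = 1.
Proof. intros H. rewrite iter_absorbing by exact H. now apply absorbed_absorbing. Qed.

Lemma iter_absorbed_nonneg n s : 0 <= Nat.iter n step absorbed s.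
Proof.
  rewrite <- (iter_const n 0 s). apply (iter_mono _ _ _ _ _ jump_invariant_True); [easy|].
  intros; apply absorbed_bounds.
Qed.

Lemma iter_absorbed_mono n n' s :
  (n <= n')%nat -> Nat.iter n step absorbed s <= Nat.iter n' step absorbed s.
Proof.
  induction 1 as [|n' _ IH]; [lra|]. eapply Rle_trans; [exact IH|].
  replace (S n') with (n' + 1)%nat by lia. rewrite Nat.iter_add.
  apply (iter_mono _ _ _ _ _ jump_invariant_True); [easy|]. intros s' _.
  destruct (Req_EM_T (out_rate s') 0) as [E|E].
  - rewrite iter_absorbed_absorbing, absorbed_absorbing by exact E. lra.
  - rewrite absorbed_active by exact E. apply iter_absorbed_nonneg.
Qed.

Lemma iter_absorbed_geometric (P : State -> Prop) d eps :
  jump_invariant P -> 0 <= eps <= 1 ->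
  (forall s, P s -> out_rate s <> 0 -> eps <= Nat.iter d step absorbed s) ->
  forall m s, P s -> 1 - (1 - eps) ^ m <= Nat.iter (m * d) step absorbed s.
Proof.
  intros HP Heps Hd m. induction m as [|m IH]; intros s Hs.
  { simpl. pose proof (absorbed_bounds s). lra. }
  assert (Hstage : forall s', P s' ->
                     eps * 1 + (1 - eps) * absorbed s' <= Nat.iter d step absorbed s').
  { intros s' Hs'. destruct (Req_EM_T (out_rate s') 0) as [E|E].
    - rewrite iter_absorbed_absorbing, absorbed_absorbing by exact E. lra.
    - rewrite absorbed_active by exact E. specialize (Hd s' Hs' E). lra. }
  rewrite Nat.mul_succ_l, Nat.iter_add.
  eapply Rle_trans; [|apply (iter_mono P _ _ _ _ HP Hs Hstage)].
  rewrite iter_lin, iter_const. specialize (IH s Hs). simpl pow.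
  assert (0 <= 1 - eps) by lra. nra.
Qed.

Lemma iter_ge_absorbed_minus (P : State -> Prop) G h n s :
  jump_invariant P -> P s -> (forall s', P s' -> step G s' <= G s') ->
  (forall s', P s' -> absorbed s' - G s' <= h s') ->
  Nat.iter n step absorbed s - G s <= Nat.iter n step h s.
Proof.
  intros HP Hs HG Hh.
  apply Rle_trans with (Nat.iter n step (fun x => 1 * absorbed x + (-1) * G x) s).
  - rewrite iter_lin. pose proof (iter_superharmonic P G n s HP HG Hs). lra.
  - apply (iter_mono P); auto. intros s' Hs'. specialize (Hh s' Hs'). lra.
Qed.

End JumpChain.

Lemma Lim_seq_ge_geometric (u : nat -> R) (c q : R) (d : nat) :
  (forall n, 0 <= u n <= 1) -> 0 <= q < 1 ->
  (forall m n, (m * d <= n)%nat -> c - q ^ m <= u n) ->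
  c <= real (Lim_seq u).
Proof.
  intros Hu Hq Hm.
  assert (Hbelow : forall m, Rbar_le (c - q ^ m) (Lim_seq u)).
  { intros m. rewrite <- Lim_seq_const. apply Lim_seq_le_loc.
    exists (m * d)%nat. apply Hm. }
  assert (Hfin : exists l, Lim_seq u = Finite l).
  { assert (H0 : Rbar_le 0 (Lim_seq u)).
    { rewrite <- (Lim_seq_const 0). apply Lim_seq_le_loc. exists O. intros n _. apply Hu. }
    assert (H1 : Rbar_le (Lim_seq u) 1).
    { rewrite <- (Lim_seq_const 1). apply Lim_seq_le_loc. exists O. intros n _. apply Hu. }
    destruct (Lim_seq u) as [l| |]; simpl in *; [eauto|contradiction|contradiction]. }
  destruct Hfin as [l Hl]. rewrite Hl in Hbelow |- *. simpl.
  assert (Hlim : is_lim_seq (fun m => c - q ^ m) (c - 0)).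
  { apply is_lim_seq_minus'; [apply is_lim_seq_const|apply is_lim_seq_geom].
    rewrite Rabs_pos_eq; lra. }
  rewrite Rminus_0_r in Hlim.
  exact (is_lim_seq_le _ _ c l Hbelow Hlim (is_lim_seq_const l)).
Qed.

(** * Exponential bounds *)

Lemma exp_le_compat x y : x <= y -> exp x <= exp y.
Proof. intros [H|H]; [left; now apply exp_increasing|right; now rewrite H]. Qed.

Lemma pow_le_exp x n : 0 <= 1 - x -> (1 - x) ^ n <= exp (- x * INR n).
Proof.
  intros Hx.
  assert (Hpow : exp (- x) ^ n = exp (- x * INR n)).
  { induction n as [|n IH]; [simpl; now rewrite Rmult_0_r, exp_0|].
    rewrite S_INR, <- tech_pow_Rmult, IH, <- exp_plus. f_equal. ring. }
  rewrite <- Hpow. apply pow_incr. pose proof (exp_ineq1_le (- x)). lra.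
Qed.

Lemma e_gt_2 : 2 < exp 1.
Proof. pose proof (exp_ineq1 1 ltac:(lra)). lra. Qed.

Lemma log_rate_le u r q delta : 0 < u -> / exp 1 <= r < 1 -> 0 < q <= 1 -> 0 < delta <= 1 ->
  (1 - delta) * (u * q / exp 1) * ln (/ r) <= u * (1 - r).
Proof.
  intros Hu Hr Hq Hd. pose proof e_gt_2.
  assert (Hr0 : 0 < r) by (pose proof (Rinv_0_lt_compat (exp 1) ltac:(lra)); lra).
  assert (Hinv : / r <= exp 1).
  { rewrite <- (Rinv_inv (exp 1)). apply Rinv_le_contravar; [apply Rinv_0_lt_compat; lra|lra]. }
  assert (Hln0 : 0 <= ln (/ r)).
  { rewrite <- ln_1. apply ln_le; [lra|]. rewrite <- Rinv_1. apply Rinv_le_contravar; lra. }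
  (* ln (1/r) <= 1/r - 1 = (1 - r)/r <= e (1 - r) *)
  assert (Hln : ln (/ r) <= exp 1 * (1 - r)).
  { pose proof (exp_ineq1_le (ln (/ r))) as Hexp.
    rewrite exp_ln in Hexp by (apply Rinv_0_lt_compat; lra).
    assert ((1 - r) * / r = / r - 1) by (field; lra).
    assert ((1 - r) * / r <= (1 - r) * exp 1) by (apply Rmult_le_compat_l; lra).
    lra. }
  set (c := u * q / exp 1).
  assert (Hc : 0 <= c) by (apply Rdiv_le_0_compat; [apply Rmult_le_pos|]; lra).
  apply Rle_trans with (c * ln (/ r)).
  { assert (0 <= c * ln (/ r)) by (apply Rmult_le_pos; lra). nra. }
  apply Rle_trans with (c * (exp 1 * (1 - r))); [apply Rmult_le_compat_l; lra|].
  unfold c. replace (u * q / exp 1 * (exp 1 * (1 - r))) with (u * (1 - r) * q) by (field; lra).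
  assert (0 <= u * (1 - r)) by (apply Rmult_le_pos; lra).
  nra.
Qed.

Lemma gauss_rate_le u r q delta : 0 < u -> r < / exp 1 -> 0 < q <= 1 -> 0 < delta <= 1 ->
  u * q / exp 1 * (delta ^ 2 / 2) <= u * (1 - r).
Proof.
  intros Hu Hr Hq Hd. pose proof e_gt_2.
  assert (/ exp 1 < / 2) by (apply Rinv_lt_contravar; lra).
  assert (delta ^ 2 <= 1) by (simpl; nra).
  apply Rle_trans with (u / exp 1 * / 2).
  - unfold Rdiv. rewrite !Rmult_assoc. apply Rmult_le_compat_l; [lra|].
    assert (0 < / exp 1) by (apply Rinv_0_lt_compat; lra).
    assert (0 <= delta ^ 2) by apply pow2_ge_0.
    replace (q * (/ exp 1 * (delta ^ 2 * / 2))) with (q * delta ^ 2 * (/ exp 1 * / 2)) by ring.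
    rewrite <- (Rmult_1_l (/ exp 1 * / 2)) at 2.
    apply Rmult_le_compat_r; [lra|nra].
  - unfold Rdiv. rewrite Rmult_assoc. apply Rmult_le_compat_l; [lra|]. nra.
Qed.

Lemma exp_le_tail_sum u r q delta n : 0 < u -> 0 < r < 1 -> 0 < q <= 1 -> 0 < delta <= 1 ->
  exp (- (u * (1 - r)) * INR n)
  <= Rpower (/ r) (- ((1 - delta) * (u * q / exp 1) * INR n))
     + exp (- (u * q / exp 1) * (delta ^ 2 / 2) * INR n).
Proof.
  intros Hu Hr Hq Hd. pose proof (pos_INR n).
  assert (0 < Rpower (/ r) (- ((1 - delta) * (u * q / exp 1) * INR n)))
    by (unfold Rpower; apply exp_pos).
  assert (0 < exp (- (u * q / exp 1) * (delta ^ 2 / 2) * INR n)) by apply exp_pos.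
  destruct (Rle_dec (/ exp 1) r) as [Hre|Hre].
  - pose proof (log_rate_le u r q delta Hu ltac:(lra) Hq Hd).
    enough (exp (- (u * (1 - r)) * INR n)
            <= Rpower (/ r) (- ((1 - delta) * (u * q / exp 1) * INR n))) by lra.
    unfold Rpower. apply exp_le_compat. nra.
  - pose proof (gauss_rate_le u r q delta Hu ltac:(lra) Hq Hd).
    enough (exp (- (u * (1 - r)) * INR n)
            <= exp (- (u * q / exp 1) * (delta ^ 2 / 2) * INR n)) by lra.
    apply exp_le_compat. nra.
Qed.

(** * The learning dynamics *)

Lemma in_arms K k : In k (arms K) <-> (1 <= k <= K)%nat.
Proof. unfold arms. rewrite in_seq. lia. Qed.

Lemma in_others K k k' : In k' (others K k) <-> In k' (arms K) /\ k' <> k.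
Proof. unfold others. rewrite filter_In. destruct (Nat.eqb_spec k' k); simpl; intuition. Qed.

Lemma arms_cons K : (1 <= K)%nat -> arms K = 1%nat :: seq 2 (K - 1).
Proof. intros H. destruct K as [|K]; [lia|]. unfold arms. simpl. now rewrite Nat.sub_0_r. Qed.

Lemma others_one K : (1 <= K)%nat -> others K 1 = seq 2 (K - 1).
Proof.
  intros H. unfold others. rewrite arms_cons by exact H. simpl.
  apply forallb_filter_id, forallb_forall. intros x Hx. apply in_seq in Hx.
  destruct (Nat.eqb_spec x 1); [lia|reflexivity].
Qed.

Lemma others_ge2 K k : (1 <= K)%nat -> (2 <= k)%nat ->
  others K k = 1%nat :: filter (fun k' => negb (Nat.eqb k' k)) (seq 2 (K - 1)).
Proof.
  intros H Hk. unfold others. rewrite arms_cons by exact H. simpl.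
  destruct k as [|[|k]]; [lia|lia|reflexivity].
Qed.

Lemma INR_move s k k' i : k <> k' -> (1 <= s k')%nat ->
  INR (move s k k' i)
  = INR (s i) + (if Nat.eqb i k then 1 else 0) - (if Nat.eqb i k' then 1 else 0).
Proof.
  intros Hk Hs. unfold move. destruct (Nat.eqb_spec i k) as [->|].
  - destruct (Nat.eqb_spec k k'); [lia|]. rewrite S_INR. lra.
  - destruct (Nat.eqb_spec i k') as [->|]; [|lra].
    destruct (s k') as [|m]; [lia|]. rewrite S_INR. simpl. lra.
Qed.

Lemma move_target s k k' : k <> k' -> move s k k' k = S (s k).
Proof. intros H. unfold move. now rewrite Nat.eqb_refl. Qed.

Lemma move_source s k k' : k <> k' -> move s k k' k' = Nat.pred (s k').
Proof.
  intros H. unfold move. destruct (Nat.eqb_spec k' k); [congruence|]. now rewrite Nat.eqb_refl.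
Qed.

Lemma move_other s k k' i : i <> k -> i <> k' -> move s k k' i = s i.
Proof.
  intros Hk Hk'. unfold move.
  destruct (Nat.eqb_spec i k); [contradiction|]. destruct (Nat.eqb_spec i k'); [contradiction|].
  reflexivity.
Qed.

Definition pos_min (p : nat -> R) (l : list nat) : R :=
  fold_right (fun k m => if Rlt_dec 0 (p k) then Rmin (p k) m else m) 1 l.

Lemma pos_min_pos p l : 0 < pos_min p l.
Proof.
  induction l as [|k l IH]; simpl; [lra|].
  destruct (Rlt_dec 0 (p k)); [apply Rmin_glb_lt|]; assumption.
Qed.

Lemma pos_min_le p l k : In k l -> 0 < p k -> pos_min p l <= p k.
Proof.
  induction l as [|x l IH]; simpl; intros Hk Hp; [contradiction|].
  destruct (Rlt_dec 0 (p x)).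
  - destruct Hk as [->|Hk]; [apply Rmin_l|].
    eapply Rle_trans; [apply Rmin_r|auto].
  - destruct Hk as [->|Hk]; [contradiction|auto].
Qed.

Lemma tail_bounds_of_mono (K : nat) (p : nat -> R) :
  (forall k, (2 <= k)%nat -> (k < K)%nat -> p k >= p (S k)) -> p K >= 0 ->
  forall k, (2 <= k <= K)%nat -> 0 <= p k <= p 2%nat.
Proof.
  intros Hmon HpK.
  assert (Hdesc : forall d j, (2 <= j)%nat -> (j + d <= K)%nat -> p (j + d)%nat <= p j).
  { induction d as [|d IH]; intros j Hj Hd; [rewrite Nat.add_0_r; lra|].
    specialize (IH j Hj ltac:(lia)). specialize (Hmon (j + d)%nat ltac:(lia) ltac:(lia)).
    rewrite Nat.add_succ_r. lra. }
  intros k Hk. split.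
  - specialize (Hdesc (K - k)%nat k ltac:(lia) ltac:(lia)).
    replace (k + (K - k))%nat with K in Hdesc by lia. lra.
  - specialize (Hdesc (k - 2)%nat 2%nat ltac:(lia) ltac:(lia)).
    now replace (2 + (k - 2))%nat with k in Hdesc by lia.
Qed.

Section Dynamics.
Variables (K N : nat) (lam mu : R) (p : nat -> R).
Hypothesis HK : (2 <= K)%nat.
Hypothesis HN : (1 <= N)%nat.
Hypothesis Hlam : 0 < lam.
Hypothesis Hmu : 0 < mu <= 1.
Hypothesis Hp1 : 0 < p 1%nat <= 1.
Hypothesis Hp2 : 0 < p 2%nat.
Hypothesis Hp12 : p 2%nat < p 1%nat.
Hypothesis Hp_tail : forall k, (2 <= k <= K)%nat -> 0 <= p k <= p 2%nat.

Local Notation rate_in := (rate_in K N lam mu p).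
Local Notation rate_sw := (rate_sw N lam p).

Definition learning_jumps (s : nat -> nat) : list (R * (nat -> nat)) :=
  map (fun k => (rate_in s k, move s k 0)) (arms K)
  ++ flat_map (fun k => map (fun k' => (rate_sw s k k', move s k k')) (others K k)) (arms K).

Lemma lsum_learning_jumps (f : R * (nat -> nat) -> R) s :
  lsum (learning_jumps s) f
  = lsum (arms K) (fun k => f (rate_in s k, move s k 0))
    + lsum (arms K) (fun k => lsum (others K k) (fun k' => f (rate_sw s k k', move s k k'))).
Proof.
  unfold learning_jumps. rewrite lsum_app, lsum_map, lsum_flat_map. f_equal.
  apply lsum_ext. intros k _. apply lsum_map.
Qed.

Lemma out_rate_learning s : out_rate learning_jumps s = total_rate K N lam mu p s.
Proof. exact (lsum_learning_jumps fst s). Qed.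

Definition target_ind (s : nat -> nat) : R := if is_target K N s then 1 else 0.

Lemma reach_iter n s :
  reach K N lam mu p n s = Nat.iter n (step learning_jumps) target_ind s.
Proof.
  revert s. induction n as [|n IH]; intros s; [reflexivity|].
  transitivity (step learning_jumps (reach K N lam mu p n) s).
  - unfold step. rewrite out_rate_learning, lsum_learning_jumps. reflexivity.
  - apply step_ext. exact IH.
Qed.

Local Notation out_rate := (out_rate learning_jumps).
Local Notation step := (step learning_jumps).
Local Notation absorbed := (absorbed learning_jumps).

Lemma in_learning_jumps_inv s j : In j (learning_jumps s) ->
  (exists k, In k (arms K) /\ j = (rate_in s k, move s k 0%nat)) \/
  (exists k k', In k (arms K) /\ In k' (others K k) /\ j = (rate_sw s k k', move s k k')).
Proof.
  unfold learning_jumps. rewrite in_app_iff, in_map_iff, in_flat_map.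
  intros [[k [<- Hk]]|[k [Hk Hj]]]; [left; eauto|right].
  apply in_map_iff in Hj. destruct Hj as [k' [<- Hk']]. eauto.
Qed.

Lemma in_learning_jumps_learn s k :
  In k (arms K) -> In (rate_in s k, move s k 0%nat) (learning_jumps s).
Proof.
  intros Hk. unfold learning_jumps. apply in_or_app. left.
  apply in_map_iff. eauto.
Qed.

Lemma in_learning_jumps_swap s k k' : In k (arms K) -> In k' (others K k) ->
  In (rate_sw s k k', move s k k') (learning_jumps s).
Proof.
  intros Hk Hk'. unfold learning_jumps. apply in_or_app. right.
  apply in_flat_map. exists k. split; [exact Hk|]. apply in_map_iff. eauto.
Qed.

Lemma INR_N_pos : 0 < INR N.
Proof. apply lt_0_INR. lia. Qed.

Lemma INR_K_ge1 : 1 <= INR K.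
Proof. apply (le_INR 1). lia. Qed.

Lemma mu_over_K_bounds : 0 < mu / INR K <= mu.
Proof.
  pose proof INR_K_ge1. split; [apply Rdiv_lt_0_compat; lra|].
  apply Rle_div_l; [lra|]. nra.
Qed.

Lemma p_arm k : In k (arms K) -> 0 <= p k <= p 1%nat.
Proof.
  rewrite in_arms. intros Hk. destruct (Nat.eq_dec k 1) as [->|]; [lra|].
  pose proof (Hp_tail k ltac:(lia)). lra.
Qed.

Lemma frac_N_bounds i : (i <= N)%nat -> 0 <= INR i / INR N <= 1.
Proof.
  intros Hi. pose proof INR_N_pos. pose proof (le_INR _ _ Hi). split.
  - apply Rdiv_le_0_compat; [apply pos_INR|lra].
  - apply Rle_div_l; lra.
Qed.

Lemma rate_in_nonneg s k : In k (arms K) -> 0 <= rate_in s k.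
Proof.
  intros Hk. pose proof (p_arm k Hk). pose proof mu_over_K_bounds. pose proof INR_N_pos.
  assert (0 <= INR (s k) / INR N) by (apply Rdiv_le_0_compat; [apply pos_INR|lra]).
  pose proof (pos_INR (s 0%nat)).
  unfold Defs.rate_in. apply Rmult_le_pos; [|lra].
  apply Rmult_le_pos; [apply Rmult_le_pos; lra|]. nra.
Qed.

Lemma rate_sw_nonneg s k k' : In k (arms K) -> 0 <= rate_sw s k k'.
Proof.
  intros Hk. pose proof (p_arm k Hk). pose proof INR_N_pos.
  assert (0 <= INR (s k) / INR N) by (apply Rdiv_le_0_compat; [apply pos_INR|lra]).
  pose proof (pos_INR (s k')).
  unfold Defs.rate_sw. apply Rmult_le_pos; [|lra].
  apply Rmult_le_pos; [apply Rmult_le_pos|]; lra.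
Qed.

Lemma learning_jumps_nonneg s j : In j (learning_jumps s) -> 0 <= fst j.
Proof.
  intros Hj. destruct (in_learning_jumps_inv s j Hj) as [[k [Hk ->]]|[k [k' [Hk [_ ->]]]]].
  - now apply rate_in_nonneg.
  - now apply rate_sw_nonneg.
Qed.

Lemma rate_in_idle s k : s 0%nat = 0%nat -> rate_in s k = 0.
Proof. intros H. unfold Defs.rate_in. rewrite H. simpl. ring. Qed.

Lemma rate_sw_idle s k k' : ((s k = 0 \/ s k' = 0)%nat \/ p k = 0) -> rate_sw s k k' = 0.
Proof.
  unfold Defs.rate_sw. intros [[H|H]|H]; rewrite H; simpl; unfold Rdiv; ring.
Qed.

Lemma out_rate_idle s : s 0%nat = 0%nat ->
  (forall k k', In k (arms K) -> In k' (others K k) -> (s k = 0 \/ s k' = 0)%nat \/ p k = 0) ->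
  out_rate s = 0.
Proof.
  intros H0 Hsw. apply out_rate_zero. intros j Hj.
  destruct (in_learning_jumps_inv s j Hj) as [[k [Hk ->]]|[k [k' [Hk [Hk' ->]]]]].
  - now apply rate_in_idle.
  - apply rate_sw_idle. auto.
Qed.

Definition population (s : nat -> nat) : Prop :=
  lsum (seq 0 (S K)) (fun i => INR (s i)) = INR N.

Lemma population_split s : population s ->
  INR (s 0%nat) + lsum (arms K) (fun k => INR (s k)) = INR N.
Proof. intros H. exact H. Qed.

Lemma population_le s i : population s -> (i <= K)%nat -> (s i <= N)%nat.
Proof.
  intros Hs Hi. apply INR_le. rewrite <- Hs.
  apply (lsum_ge_term _ (fun i => INR (s i))); [intros; apply pos_INR|].
  apply in_seq. lia.
Qed.

Lemma population_move s k k' : population s -> k <> k' -> (k <= K)%nat -> (k' <= K)%nat ->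
  (1 <= s k')%nat -> population (move s k k').
Proof.
  intros Hs Hkk' Hk Hk' Hsk'. unfold population.
  rewrite (lsum_ext _ _ (fun i => INR (s i) + (if Nat.eqb i k then 1 else 0)
                                   + (-1) * (if Nat.eqb i k' then 1 else 0)))
    by (intros; rewrite INR_move by assumption; ring).
  rewrite !lsum_plus, lsum_scal, !lsum_indicator; try apply seq_NoDup; try (apply in_seq; lia).
  unfold population in Hs. lra.
Qed.

Lemma population_closed : jump_invariant learning_jumps population.
Proof.
  intros s j Hs Hj Hrate.
  destruct (in_learning_jumps_inv s j Hj) as [[k [Hk ->]]|[k [k' [Hk [Hk' ->]]]]]; simpl in *.
  - apply in_arms in Hk. apply population_move; auto; try lia.
    destruct (s 0%nat) eqn:E; [|lia]. exfalso. apply Hrate. now apply rate_in_idle.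
  - apply in_others in Hk'. destruct Hk' as [Hk' Hne]. apply in_arms in Hk, Hk'.
    apply population_move; auto; try lia.
    destruct (s k') eqn:E; [|lia]. exfalso. apply Hrate. apply rate_sw_idle. auto.
Qed.

Lemma population_init : population (init_state N).
Proof.
  unfold population. simpl seq. rewrite lsum_cons, lsum_zero.
  - unfold init_state. simpl. ring.
  - intros i Hi. apply in_seq in Hi. unfold init_state.
    destruct (Nat.eqb_spec i 0); [lia|reflexivity].
Qed.

Definition ratio : R := p 2%nat / p 1%nat.
Definition shrink : R := 1 - mu / INR K * (1 - ratio).
Definition potential (s : nat -> nat) : R := ratio ^ s 1%nat * shrink ^ s 0%nat.

Lemma ratio_bounds : 0 < ratio < 1.
Proof. unfold ratio. split; [apply Rdiv_lt_0_compat; lra|]. apply Rlt_div_l; lra. Qed.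

Lemma shrink_bounds : 0 <= shrink <= 1.
Proof. pose proof ratio_bounds. pose proof mu_over_K_bounds. unfold shrink. nra. Qed.

Lemma potential_nonneg s : 0 <= potential s.
Proof.
  pose proof ratio_bounds. pose proof shrink_bounds.
  unfold potential. apply Rmult_le_pos; apply pow_le; lra.
Qed.

Lemma sum_rate_in_le s : population s ->
  lsum (arms K) (fun k => rate_in s k) <= INR (s 0%nat) * lam * p 1%nat.
Proof.
  intros Hs. pose proof INR_N_pos. pose proof INR_K_ge1. pose proof mu_over_K_bounds.
  pose proof (population_split s Hs) as Hsplit. pose proof (pos_INR (s 0%nat)).
  set (x := INR (s 0%nat) * lam * p 1%nat).
  assert (Hx : 0 <= x) by (unfold x; apply Rmult_le_pos; [apply Rmult_le_pos|]; lra).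
  apply Rle_trans with
    (lsum (arms K) (fun k => x * (mu / INR K) + x * (1 - mu) / INR N * INR (s k))).
  - apply lsum_le. intros k Hk. pose proof (p_arm k Hk). pose proof (pos_INR (s k)).
    assert (0 <= INR (s 0%nat) * lam * (mu / INR K + (1 - mu) * (INR (s k) / INR N))).
    { apply Rmult_le_pos; [apply Rmult_le_pos; lra|].
      assert (0 <= INR (s k) / INR N) by (apply Rdiv_le_0_compat; lra). nra. }
    unfold Defs.rate_in.
    apply Rle_trans with
      (INR (s 0%nat) * lam * (mu / INR K + (1 - mu) * (INR (s k) / INR N)) * p 1%nat).
    + apply Rmult_le_compat_l; lra.
    + right. unfold x. field. lra.
  - rewrite lsum_plus, lsum_const, lsum_scal. unfold arms. rewrite length_seq.
    fold (arms K).
    assert (Hsum : lsum (arms K) (fun k => INR (s k)) <= INR N) by lra.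
    assert (0 <= x * (1 - mu) / INR N) by (apply Rdiv_le_0_compat; [nra|lra]).
    assert (x * (1 - mu) / INR N * lsum (arms K) (fun k => INR (s k)) <= x * (1 - mu)).
    { apply Rle_trans with (x * (1 - mu) / INR N * INR N); [apply Rmult_le_compat_l; lra|].
      right. field. lra. }
    replace (INR K * (x * (mu / INR K))) with (x * mu) by (field; lra).
    lra.
Qed.

Lemma rate_in_one_ge s : INR (s 0%nat) * lam * p 1%nat * (mu / INR K) <= rate_in s 1%nat.
Proof.
  pose proof INR_N_pos. pose proof (pos_INR (s 0%nat)). pose proof (pos_INR (s 1%nat)).
  assert (0 <= (1 - mu) * (INR (s 1%nat) / INR N)).
  { apply Rmult_le_pos; [lra|apply Rdiv_le_0_compat; lra]. }
  assert (0 <= INR (s 0%nat) * lam * p 1%nat) by (apply Rmult_le_pos; [apply Rmult_le_pos|]; lra).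
  unfold Defs.rate_in.
  replace (INR (s 0%nat) * lam * (mu / INR K + (1 - mu) * (INR (s 1%nat) / INR N)) * p 1%nat)
    with (INR (s 0%nat) * lam * p 1%nat * (mu / INR K)
          + INR (s 0%nat) * lam * p 1%nat * ((1 - mu) * (INR (s 1%nat) / INR N))) by ring.
  assert (0 <= INR (s 0%nat) * lam * p 1%nat * ((1 - mu) * (INR (s 1%nat) / INR N)))
    by (apply Rmult_le_pos; lra).
  lra.
Qed.

Lemma learning_drift_nonpos s : population s ->
  lsum (arms K) (fun k => rate_in s k * (potential (move s k 0%nat) - potential s)) <= 0.
Proof.
  intros Hs. pose proof ratio_bounds. pose proof shrink_bounds. pose proof mu_over_K_bounds.
  destruct (s 0%nat) as [|m] eqn:E0.
  { rewrite lsum_zero; [lra|]. intros k _. rewrite rate_in_idle by exact E0. ring. }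
  set (X := ratio ^ s 1%nat * shrink ^ m).
  assert (HX : 0 <= X) by (unfold X; apply Rmult_le_pos; apply pow_le; lra).
  (* arm 1 receives at least the fraction mu/K of all learning events *)
  assert (Hkey : mu / INR K * lsum (arms K) (fun k => rate_in s k) <= rate_in s 1%nat).
  { pose proof (sum_rate_in_le s Hs). pose proof (rate_in_one_ge s). rewrite E0 in *. nra. }
  assert (Hs0 : potential s = shrink * X) by (unfold potential, X; rewrite E0; simpl; ring).
  assert (Hmove1 : potential (move s 1 0) = ratio * X)
    by (unfold potential, move, X; simpl; rewrite E0; simpl; ring).
  assert (Hmovek : forall k, In k (seq 2 (K - 1)) -> potential (move s k 0) = X).
  { intros k Hk. apply in_seq in Hk. unfold potential, move, X.
    destruct (Nat.eqb_spec 1 k); [lia|]. destruct (Nat.eqb_spec 0 k); [lia|].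
    simpl. now rewrite E0. }
  rewrite arms_cons in * by lia. rewrite lsum_cons in *. rewrite Hmove1, Hs0.
  rewrite (lsum_ext _ _ (fun k => (1 - shrink) * X * rate_in s k))
    by (intros k Hk; rewrite Hmovek by exact Hk; ring).
  rewrite lsum_scal.
  set (R1 := rate_in s 1%nat) in *.
  set (Ro := lsum (seq 2 (K - 1)) (fun k => rate_in s k)) in *.
  replace (R1 * (ratio * X - shrink * X) + (1 - shrink) * X * Ro)
    with (X * (1 - ratio) * (mu / INR K * (R1 + Ro) - R1)) by (unfold shrink; ring).
  assert (0 <= X * (1 - ratio)) by (apply Rmult_le_pos; lra).
  nra.
Qed.

Lemma swap_pair_drift_nonpos s j : (2 <= j <= K)%nat ->
  rate_sw s 1%nat j * (potential (move s 1 j) - potential s)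
  + rate_sw s j 1%nat * (potential (move s j 1) - potential s) <= 0.
Proof.
  intros Hj. pose proof ratio_bounds. pose proof shrink_bounds. pose proof INR_N_pos.
  pose proof (Hp_tail j Hj).
  destruct (s 1%nat) as [|m] eqn:E1.
  { rewrite !(rate_sw_idle s), Rmult_0_l, Rmult_0_l; [lra| |]; auto. }
  set (W := ratio ^ m * shrink ^ s 0%nat).
  assert (HW : 0 <= W) by (unfold W; apply Rmult_le_pos; apply pow_le; lra).
  assert (Hs : potential s = ratio * W) by (unfold potential, W; rewrite E1; simpl; ring).
  assert (H1j : potential (move s 1 j) = ratio * ratio * W).
  { unfold potential, move, W. destruct (Nat.eqb_spec 0 j); [lia|].
    simpl. rewrite E1. simpl. ring. }
  assert (Hj1 : potential (move s j 1) = W).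
  { unfold potential, move, W.
    destruct (Nat.eqb_spec 1 j); [lia|]. destruct (Nat.eqb_spec 0 j); [lia|].
    simpl. now rewrite E1. }
  rewrite Hs, H1j, Hj1. unfold Defs.rate_sw. rewrite E1.
  set (Z := INR (s j) * lam * INR (S m) / INR N * W).
  assert (HZ : 0 <= Z).
  { unfold Z. apply Rmult_le_pos; [|exact HW]. apply Rdiv_le_0_compat; [|lra].
    apply Rmult_le_pos; [apply Rmult_le_pos|]; try apply pos_INR; lra. }
  (* ratio * p 1 = p 2 turns the drift into a multiple of p j - p 2 *)
  match goal with |- ?L <= 0 =>
    replace L with (Z * (1 - ratio) * (p j - p 2%nat)) by (unfold Z, ratio; field; lra) end.
  assert (0 <= Z * (1 - ratio)) by (apply Rmult_le_pos; lra).
  nra.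
Qed.

Lemma swap_drift_nonpos s :
  lsum (arms K) (fun k => lsum (others K k)
    (fun k' => rate_sw s k k' * (potential (move s k k') - potential s))) <= 0.
Proof.
  rewrite arms_cons, lsum_cons, others_one by lia.
  rewrite (lsum_ext (seq 2 (K - 1))
    (fun k => lsum (others K k)
                (fun k' => rate_sw s k k' * (potential (move s k k') - potential s)))
    (fun k => rate_sw s k 1%nat * (potential (move s k 1) - potential s))).
  - rewrite <- lsum_plus. rewrite <- (lsum_zero (seq 2 (K - 1)) (fun _ => 0)) by auto.
    apply lsum_le. intros j Hj. apply in_seq in Hj. apply swap_pair_drift_nonpos. lia.
  - intros k Hk. apply in_seq in Hk.
    rewrite others_ge2 by lia. rewrite lsum_cons, lsum_zero; [ring|].
    intros k' Hk'. apply filter_In in Hk'. destruct Hk' as [Hk' Hne]. apply in_seq in Hk'.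
    destruct (Nat.eqb_spec k' k); [discriminate|].
    replace (potential (move s k k')) with (potential s); [ring|].
    unfold potential, move.
    destruct (Nat.eqb_spec 1 k); [lia|]. destruct (Nat.eqb_spec 1 k'); [lia|].
    destruct (Nat.eqb_spec 0 k); [lia|]. destruct (Nat.eqb_spec 0 k'); [lia|].
    reflexivity.
Qed.

Lemma potential_superharmonic s : population s -> step potential s <= potential s.
Proof.
  intros Hs. apply (step_le_of_drift learning_jumps learning_jumps_nonneg).
  rewrite lsum_learning_jumps. simpl.
  pose proof (learning_drift_nonpos s Hs). pose proof (swap_drift_nonpos s). lra.
Qed.

Definition rate_floor : R := lam * mu * pos_min p (arms K) / (INR K * INR N).
Definition rate_ceiling : R := (INR K + INR K * INR K) * (INR N * lam).
Definition min_jump_prob : R := Rmin 1 (rate_floor / rate_ceiling).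

Lemma rate_floor_pos : 0 < rate_floor.
Proof.
  pose proof INR_N_pos. pose proof INR_K_ge1. pose proof (pos_min_pos p (arms K)).
  unfold rate_floor. apply Rdiv_lt_0_compat; [|nra].
  apply Rmult_lt_0_compat; [|lra]. nra.
Qed.

Lemma rate_floor_le_in s : (1 <= s 0%nat)%nat -> rate_floor <= rate_in s 1%nat.
Proof.
  intros Hs0. pose proof INR_N_pos. pose proof INR_K_ge1. pose proof mu_over_K_bounds.
  assert (Hmin : pos_min p (arms K) <= p 1%nat)
    by (apply pos_min_le; [apply in_arms; lia|lra]).
  assert (HN1 : 1 <= INR N) by (apply (le_INR 1); lia).
  assert (Hs1 : 1 <= INR (s 0%nat)) by (apply (le_INR 1); lia).
  eapply Rle_trans; [|apply rate_in_one_ge].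
  unfold rate_floor.
  replace (lam * mu * pos_min p (arms K) / (INR K * INR N))
    with (lam * pos_min p (arms K) * (mu / INR K) / INR N) by (field; lra).
  assert (0 <= lam * pos_min p (arms K) * (mu / INR K)).
  { pose proof (pos_min_pos p (arms K)). apply Rmult_le_pos; [|lra]. nra. }
  apply Rle_trans with (lam * pos_min p (arms K) * (mu / INR K)).
  - apply Rle_div_l; [lra|]. nra.
  - apply Rmult_le_compat_r; [lra|].
    apply Rle_trans with (lam * p 1%nat); [apply Rmult_le_compat_l; lra|].
    assert (0 <= lam * p 1%nat) by nra.
    replace (INR (s 0%nat) * lam * p 1%nat) with (INR (s 0%nat) * (lam * p 1%nat)) by ring.
    nra.
Qed.

Lemma rate_floor_le_sw s k k' : In k (arms K) -> 0 < p k ->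
  (1 <= s k)%nat -> (1 <= s k')%nat -> rate_floor <= rate_sw s k k'.
Proof.
  intros Hk Hpk Hsk Hsk'. pose proof INR_N_pos. pose proof INR_K_ge1. pose proof mu_over_K_bounds.
  pose proof (pos_min_le p (arms K) k Hk Hpk). pose proof (pos_min_pos p (arms K)).
  assert (1 <= INR (s k)) by (apply (le_INR 1); lia).
  assert (1 <= INR (s k')) by (apply (le_INR 1); lia).
  unfold rate_floor, Defs.rate_sw.
  replace (lam * mu * pos_min p (arms K) / (INR K * INR N))
    with (mu / INR K * pos_min p (arms K) * (lam / INR N)) by (field; lra).
  replace (INR (s k') * lam * (INR (s k) / INR N) * p k)
    with (INR (s k') * INR (s k) * p k * (lam / INR N)) by (field; lra).
  apply Rmult_le_compat_r; [apply Rdiv_le_0_compat; lra|].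
  assert (1 <= INR (s k') * INR (s k)) by nra.
  nra.
Qed.

Lemma jump_rate_le s j : population s -> In j (learning_jumps s) -> fst j <= INR N * lam.
Proof.
  intros Hs Hj. pose proof INR_N_pos. pose proof mu_over_K_bounds.
  assert (Hscale : forall a c d, 0 <= a <= INR N -> 0 <= c <= 1 -> 0 <= d <= 1 ->
                                 a * lam * c * d <= INR N * lam).
  { intros a c d Ha Hc Hd.
    assert (0 <= a * lam) by (apply Rmult_le_pos; lra).
    assert (0 <= a * lam * c) by (apply Rmult_le_pos; lra).
    apply Rle_trans with (a * lam * c).
    { rewrite <- (Rmult_1_r (a * lam * c)) at 2. apply Rmult_le_compat_l; lra. }
    apply Rle_trans with (a * lam).
    { rewrite <- (Rmult_1_r (a * lam)) at 2. apply Rmult_le_compat_l; lra. }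
    apply Rmult_le_compat_r; lra. }
  assert (Hocc : forall i, (i <= K)%nat -> 0 <= INR (s i) <= INR N).
  { intros i Hi. split; [apply pos_INR|apply le_INR, population_le; auto]. }
  destruct (in_learning_jumps_inv s j Hj) as [[k [Hk ->]]|[k [k' [Hk [Hk' ->]]]]];
    simpl; pose proof (p_arm k Hk); apply in_arms in Hk.
  - apply Hscale; [apply Hocc; lia| |lra].
    pose proof (frac_N_bounds (s k) (population_le s k Hs ltac:(lia))). nra.
  - apply in_others, proj1, in_arms in Hk'.
    apply Hscale; [apply Hocc; lia| |lra].
    apply frac_N_bounds, population_le; auto; lia.
Qed.

Lemma out_rate_le_ceiling s : population s -> out_rate s <= rate_ceiling.
Proof.
  intros Hs. pose proof INR_N_pos.
  assert (HarmsK : INR (length (arms K)) = INR K) by (unfold arms; now rewrite length_seq).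
  change (lsum (learning_jumps s) fst <= rate_ceiling).
  eapply Rle_trans; [apply lsum_le; intros j Hj; exact (jump_rate_le s j Hs Hj)|].
  rewrite lsum_learning_jumps. unfold rate_ceiling.
  rewrite Rmult_plus_distr_r, Rmult_assoc. apply Rplus_le_compat.
  - rewrite lsum_const, HarmsK. lra.
  - rewrite <- HarmsK. apply lsum_le_const. intros k _.
    rewrite lsum_const, HarmsK. apply Rmult_le_compat_r; [nra|].
    rewrite <- HarmsK. apply le_INR, filter_length_le.
Qed.

Lemma min_jump_prob_bounds : 0 < min_jump_prob <= 1.
Proof.
  pose proof rate_floor_pos. pose proof INR_N_pos. pose proof INR_K_ge1.
  assert (0 < rate_ceiling) by (unfold rate_ceiling; apply Rmult_lt_0_compat; nra).
  unfold min_jump_prob. split; [apply Rmin_glb_lt; [lra|apply Rdiv_lt_0_compat; lra]|apply Rmin_l].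
Qed.

Lemma step_ge_floor_jump f s j : (forall s', 0 <= f s') -> population s -> out_rate s <> 0 ->
  In j (learning_jumps s) -> rate_floor <= fst j -> min_jump_prob * f (snd j) <= step f s.
Proof.
  intros Hf Hs Hout Hj Hfloor.
  pose proof (out_rate_nonneg learning_jumps learning_jumps_nonneg s).
  pose proof (out_rate_le_ceiling s Hs). pose proof rate_floor_pos.
  eapply Rle_trans; [|exact (step_ge_jump learning_jumps learning_jumps_nonneg f s j Hf Hout Hj)].
  apply Rmult_le_compat_r; [apply Hf|].
  apply Rle_trans with (rate_floor / rate_ceiling); [apply Rmin_r|].
  apply Rle_trans with (rate_floor / out_rate s).
  - apply Rmult_le_compat_l; [lra|]. apply Rinv_le_contravar; lra.
  - apply Rmult_le_compat_r; [apply Rlt_le, Rinv_0_lt_compat|]; lra.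
Qed.

Lemma min_jump_prob_pow_le1 d : min_jump_prob ^ d <= 1.
Proof. pose proof min_jump_prob_bounds. rewrite <- (pow1 d). apply pow_incr. lra. Qed.

Lemma exists_swap_partner s k :
  In k (arms K) -> population s -> s 0%nat = 0%nat -> out_rate s <> 0 ->
  exists k', In k' (others K k) /\ (1 <= s k')%nat /\ (S (s k) <= N)%nat.
Proof.
  intros Hk Hs H0 Hout.
  assert (Hpartner : exists k', In k' (others K k) /\ (1 <= s k')%nat).
  { apply NNPP. intros Hnone.
    assert (Hzero : forall i, In i (others K k) -> s i = 0%nat).
    { intros i Hi. destruct (s i) eqn:E; [reflexivity|].
      exfalso. apply Hnone. exists i. split; [exact Hi|lia]. }
    apply Hout, out_rate_idle; [exact H0|]. intros j j' Hj Hj'. left.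
    apply in_others in Hj'. destruct Hj' as [Hj'a Hne].
    destruct (Nat.eq_dec j' k) as [->|Hj'k].
    - left. apply Hzero, in_others. auto.
    - right. apply Hzero, in_others. auto. }
  destruct Hpartner as [k' [Hk' Hsk']]. exists k'. repeat split; auto.
  apply in_others in Hk'. destruct Hk' as [Hk'a Hne]. apply in_arms in Hk, Hk'a.
  rewrite <- (move_target s k k') by auto.
  apply population_le; [apply population_move|]; auto; lia.
Qed.

Lemma absorbed_by_consensus k : In k (arms K) -> 0 < p k ->
  forall d s, population s -> s 0%nat = 0%nat -> (1 <= s k)%nat -> (N - s k <= d)%nat ->
  min_jump_prob ^ d <= Nat.iter d step absorbed s.
Proof.
  intros Hk Hpk d. pose proof min_jump_prob_bounds.
  induction d as [|d IH]; intros s Hs H0 Hsk Hd;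
    (destruct (Req_EM_T (out_rate s) 0) as [E|E];
     [rewrite iter_absorbed_absorbing by exact E; apply min_jump_prob_pow_le1|]);
    destruct (exists_swap_partner s k Hk Hs H0 E) as [k' [Hk' [Hsk' Hlt]]];
    (* for d = 0, s k = N leaves nobody to swap with *)
    [lia|].
  pose proof Hk' as Hk'a. apply in_others in Hk'a. destruct Hk'a as [Hk'a Hne].
  pose proof Hk as Hka. apply in_arms in Hka, Hk'a.
  cbn [Nat.iter pow].
  apply Rle_trans with (min_jump_prob * Nat.iter d step absorbed (move s k k')).
  - apply Rmult_le_compat_l; [lra|]. apply IH.
    + apply population_move; auto; lia.
    + rewrite move_other by lia. exact H0.
    + rewrite move_target by auto. lia.
    + rewrite move_target by auto. lia.
  - apply (step_ge_floor_jump _ s (rate_sw s k k', move s k k')); auto.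
    + intros. apply iter_absorbed_nonneg, learning_jumps_nonneg.
    + apply in_learning_jumps_swap; auto.
    + apply rate_floor_le_sw; auto.
Qed.

Lemma absorbed_by_learning : forall d s, population s -> (1 <= s 0%nat \/ 1 <= s 1%nat)%nat ->
  (s 0%nat + (N - s 1%nat) <= d)%nat -> min_jump_prob ^ d <= Nat.iter d step absorbed s.
Proof.
  pose proof min_jump_prob_bounds. assert (H1 : In 1%nat (arms K)) by (apply in_arms; lia).
  induction d as [|d IH]; intros s Hs Hocc Hd;
    (destruct (s 0%nat) as [|m] eqn:E0;
     [apply (absorbed_by_consensus 1%nat); auto; (lra || lia)|]); [lia|].
  assert (Hin : rate_floor <= rate_in s 1%nat) by (apply rate_floor_le_in; lia).
  assert (Hout : out_rate s <> 0).
  { pose proof rate_floor_pos.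
    pose proof (jump_rate_le_out_rate learning_jumps learning_jumps_nonneg s _
                  (in_learning_jumps_learn s 1 H1)).
    simpl in *. lra. }
  cbn [Nat.iter pow].
  apply Rle_trans with (min_jump_prob * Nat.iter d step absorbed (move s 1 0)).
  - apply Rmult_le_compat_l; [lra|]. apply IH.
    + apply population_move; auto; lia.
    + right. rewrite move_target by lia. lia.
    + rewrite move_target, move_source, E0 by lia. simpl. lia.
  - apply (step_ge_floor_jump _ s (rate_in s 1, move s 1 0)); auto.
    + intros. apply iter_absorbed_nonneg, learning_jumps_nonneg.
    + apply in_learning_jumps_learn, H1.
Qed.

Lemma absorbed_within s : population s ->
  min_jump_prob ^ (2 * N) <= Nat.iter (2 * N) step absorbed s.
Proof.
  intros Hs. pose proof (population_le s 0 Hs ltac:(lia)).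
  destruct (classic (1 <= s 0%nat \/ 1 <= s 1%nat)%nat) as [Hocc|Hidle].
  { apply absorbed_by_learning; auto; lia. }
  destruct (classic (exists k, In k (arms K) /\ 0 < p k /\ (1 <= s k)%nat))
    as [[k [Hk [Hpk Hsk]]]|Hnone].
  { apply (absorbed_by_consensus k); auto; lia. }
  rewrite iter_absorbed_absorbing; [apply min_jump_prob_pow_le1|].
  apply out_rate_idle; [lia|]. intros j j' Hj _.
  destruct (s j) eqn:Ej; [left; left; reflexivity|right].
  pose proof (p_arm j Hj). destruct (Rlt_dec 0 (p j)); [|lra].
  exfalso. apply Hnone. exists j. repeat split; auto; lia.
Qed.

Lemma target_of_consensus s : population s -> s 0%nat = 0%nat ->
  (forall k, (2 <= k <= K)%nat -> s k = 0%nat) -> is_target K N s = true.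
Proof.
  intros Hs H0 Hk. pose proof (population_split s Hs) as Hsplit.
  rewrite arms_cons in Hsplit by lia.
  rewrite lsum_cons, lsum_zero, H0 in Hsplit
    by (intros i Hi; apply in_seq in Hi; rewrite Hk by lia; reflexivity).
  assert (E1 : s 1%nat = N) by (apply INR_eq; simpl in Hsplit; lra).
  unfold is_target. apply forallb_forall. intros i Hi. apply in_seq in Hi. apply Nat.eqb_eq.
  destruct (Nat.eqb_spec i 1) as [->|]; [exact E1|].
  destruct i as [|i]; [exact H0|]. apply Hk. lia.
Qed.

(* An absorbing state other than the target has nobody at arm 0 or arm 1: its potential is 1. *)
Lemma target_ind_ge s : population s -> absorbed s - potential s <= target_ind s.
Proof.
  intros Hs. pose proof (potential_nonneg s).
  assert (0 <= target_ind s) by (unfold target_ind; destruct (is_target K N s); lra).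
  destruct (Req_EM_T (out_rate s) 0) as [E|E]; [|rewrite absorbed_active by exact E; lra].
  rewrite absorbed_absorbing by exact E.
  unfold target_ind. destruct (is_target K N s) eqn:T; [lra|].
  assert (Hblocked : forall j, In j (learning_jumps s) -> ~ rate_floor <= fst j).
  { intros j Hj Hge. pose proof rate_floor_pos.
    pose proof (jump_rate_le_out_rate learning_jumps learning_jumps_nonneg s j Hj). lra. }
  assert (H1 : In 1%nat (arms K)) by (apply in_arms; lia).
  assert (E0 : s 0%nat = 0%nat).
  { destruct (s 0%nat) eqn:E0; [reflexivity|]. exfalso.
    apply (Hblocked _ (in_learning_jumps_learn s 1 H1)). apply rate_floor_le_in. lia. }
  assert (E1 : s 1%nat = 0%nat).
  { destruct (s 1%nat) eqn:E1; [reflexivity|]. exfalso.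
    rewrite target_of_consensus in T; [discriminate|auto|auto|].
    intros k Hk. destruct (s k) eqn:Ek; [reflexivity|]. exfalso.
    assert (Hk1 : In k (others K 1)) by (apply in_others; split; [apply in_arms|]; lia).
    apply (Hblocked _ (in_learning_jumps_swap s 1 k H1 Hk1)).
    apply rate_floor_le_sw; auto; (lra || lia). }
  unfold potential. rewrite E0, E1. simpl. lra.
Qed.

Lemma success_prob_ge : 1 - shrink ^ N <= success_prob K N lam mu p.
Proof.
  pose proof min_jump_prob_bounds.
  set (eps := min_jump_prob ^ (2 * N)).
  assert (Heps : 0 < eps <= 1) by (split; [apply pow_lt; lra|apply min_jump_prob_pow_le1]).
  assert (Hind : forall s, 0 <= target_ind s <= 1)
    by (intros; unfold target_ind; destruct (is_target K N s); lra).
  apply (Lim_seq_ge_geometric _ _ (1 - eps) (2 * N)); [|lra|].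
  - intros n. rewrite reach_iter. split.
    + rewrite <- (iter_const learning_jumps n 0 (init_state N)).
      apply (iter_mono _ learning_jumps_nonneg _ _ _ _ _ (jump_invariant_True _)); [easy|].
      intros; apply Hind.
    + rewrite <- (iter_const learning_jumps n 1 (init_state N)).
      apply (iter_mono _ learning_jumps_nonneg _ _ _ _ _ (jump_invariant_True _)); [easy|].
      intros; apply Hind.
  - intros m n Hmn. rewrite reach_iter.
    assert (Hpot : potential (init_state N) = shrink ^ N)
      by (unfold potential, init_state; simpl; ring).
    pose proof (iter_ge_absorbed_minus learning_jumps learning_jumps_nonneg population
      potential target_ind n (init_state N) population_closed population_init
      potential_superharmonic target_ind_ge).
    pose proof (iter_absorbed_mono learning_jumps learning_jumps_nonneg _ _ (init_state N) Hmn).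
    pose proof (iter_absorbed_geometric learning_jumps learning_jumps_nonneg population (2 * N) eps
      population_closed ltac:(lra) (fun s Hs _ => absorbed_within s Hs) m (init_state N)
      population_init).
    lra.
Qed.

Lemma shrink_pow_le delta : 0 < delta <= 1 ->
  shrink ^ N
  <= Rpower (p 1%nat / p 2%nat) (- ((1 - delta) * (mu * p 1%nat / (INR K * exp 1)) * INR N))
     + exp (- (mu * p 1%nat / (INR K * exp 1)) * (delta ^ 2 / 2) * INR N).
Proof.
  intros Hdelta. pose proof ratio_bounds. pose proof mu_over_K_bounds. pose proof INR_K_ge1.
  pose proof (exp_pos 1).
  eapply Rle_trans; [apply pow_le_exp; unfold shrink; nra|].
  replace (p 1%nat / p 2%nat) with (/ ratio) by (unfold ratio; field; lra).
  replace (mu * p 1%nat / (INR K * exp 1)) with (mu / INR K * p 1%nat / exp 1) by (field; lra).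
  apply exp_le_tail_sum; lra.
Qed.

End Dynamics.

Theorem theorem1 (K N : nat) (lam mu delta : R) (p : nat -> R) :
  (2 <= K)%nat ->
  (1 <= N)%nat ->
  0 < lam ->
  0 < mu <= 1 ->
  0 < delta <= 1 ->
  0 < p 1%nat <= 1 ->
  p 2%nat <> 0 ->
  p 1%nat > p 2%nat ->
  (forall k, (2 <= k)%nat -> (k < K)%nat -> p k >= p (S k)) ->
  p K >= 0 ->
  success_prob K N lam mu p >=
    1 - Rpower (p 1%nat / p 2%nat)
              (- ((1 - delta) * (mu * p 1%nat / (INR K * exp 1)) * INR N))
      - exp (- (mu * p 1%nat / (INR K * exp 1)) * (delta ^ 2 / 2) * INR N).
Proof.
  intros HK HN Hlam Hmu Hdelta Hp1 Hp2 Hp12 Hmon HpK.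
  pose proof (tail_bounds_of_mono K p Hmon HpK) as Htail.
  assert (Hp2pos : 0 < p 2%nat) by (pose proof (Htail 2%nat ltac:(lia)); lra).
  pose proof (success_prob_ge K N lam mu p HK HN Hlam Hmu Hp1 Hp2pos Hp12 Htail).
  pose proof (shrink_pow_le K N mu p HK HN Hmu Hp1 Hp2pos Hp12 delta Hdelta).
  lra.
Qed.
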